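(* Let $n\ge 2$, let $A_1,\dots,A_n$ be pairwise distinct points in the plane and let $\Gamma$ be a circle with centre $O$. Suppose that for every $r>0$ the quantity $\sum_{i=1}^n|PA_i|^{2n-2}$ is constant as $P$ ranges over the circle $\Gamma_r$ of radius $r$ centred at $O$ (the constant may depend on $r$). Then $A_1,\dots,A_n$ are the vertices of a regular $n$-gon inscribed in a circle centred at $O$.
   Context: $|PA|$ denotes Euclidean distance. For $n=2$ a ''regular $2$-gon inscribed in a circle centred at $O$'' means two distinct points symmetric with respect to $O$. *)

From Stdlib Require Import Reals Lra.
Open Scope R_scope.

Definition point := (R * R)%type.

Definition pdist (P Q : point) : R :=
  sqrt ((fst P - fst Q) ^ 2 + (snd P - snd Q) ^ 2).

Fixpoint sumR (n : nat) (f : nat -> R) : R :=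
  match n with
  | O => 0
  | S m => sumR m f + f m
  end.

Definition ngon_vertex (n : nat) (O : point) (rho theta : R) (k : nat) : point :=
  (fst O + rho * cos (theta + 2 * PI * INR k / INR n),
   snd O + rho * sin (theta + 2 * PI * INR k / INR n)).

Definition is_regular_ngon_centred (n : nat) (A : nat -> point) (O : point) : Prop :=
  exists (rho theta : R) (sigma : nat -> nat),
    0 < rho /\
    (forall k, (k < n)%nat -> (sigma k < n)%nat) /\
    (forall k l, (k < n)%nat -> (l < n)%nat -> sigma k = sigma l -> k = l) /\
    (forall k, (k < n)%nat -> A (sigma k) = ngon_vertex n O rho theta k).

(* Identify the plane with the complex numbers and put a_i = A_i - O.  For P = O + r u with
   |u| = 1 we have |P A_i|^2 = (r u - a_i) (r conj(u) - conj(a_i)), so the moment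
     M(s, t) = sum_i ((s - a_i) (t - conj(a_i)))^(n-1)
   is constant along (r u, r / u).  Polynomial identities that hold at infinitely many
   points hold everywhere, which yields in turn:
   - M(r x, r / x) is constant for all complex x <> 0, not only for |x| = 1;
   - comparing the points s and 1 of a common circle, sum_i (s - a_i)^(n-1) is homogeneous
     of degree n - 1 in s, so the power sums p_1, ..., p_(n-1) of the a_i vanish
     (section CircleMomentsToPowerSums);
   - for n distinct numbers with p_1 = ... = p_(n-1) = 0 one has prod_i (X - a_i) = X^n + c,
     i.e. the a_i are nonzero and share their n-th power (section PowerSumsToNthPowers);
   - the n distinct numbers a_0 e^(2 i pi k / n) have that same n-th power, so they are a
     rearrangement of the a_i, which is the claim. *)

From Stdlib Require Import Reals Lra Lia.
From mathcomp Require all_boot all_algebra ring Rstruct complex.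
Open Scope R_scope.

Definition distinct_points (n : nat) (A : nat -> point) : Prop :=
  forall i j, (i < n)%nat -> (j < n)%nat -> i <> j -> A i <> A j.

Definition constant_moments (n : nat) (A : nat -> point) (O : point) : Prop :=
  forall r : R, 0 < r ->
    exists c : R, forall P : point, pdist P O = r ->
      sumR n (fun i => pdist P (A i) ^ (2 * n - 2)%nat) = c.

(* t |-> ((1 - t^2) / (1 + t^2), 2 t / (1 + t^2)) maps the naturals injectively into the unit
   circle: infinitely many sample points for the polynomial arguments. *)
Definition circle_x (t : R) : R := (1 - t * t) / (1 + t * t).
Definition circle_y (t : R) : R := 2 * t / (1 + t * t).

Lemma circle_xy_norm (t : R) : circle_x t * circle_x t + circle_y t * circle_y t = 1.
Proof. unfold circle_x, circle_y. field. nra. Qed.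

Lemma circle_x_inj (s t : R) : 0 <= s -> 0 <= t -> circle_x s = circle_x t -> s = t.
Proof.
  unfold circle_x. intros Hs Ht E.
  apply (f_equal (fun v => (1 - v) / (1 + v))) in E.
  replace ((1 - (1 - s * s) / (1 + s * s)) / (1 + (1 - s * s) / (1 + s * s))) with (s * s) in E
    by (field; nra).
  replace ((1 - (1 - t * t) / (1 + t * t)) / (1 + (1 - t * t) / (1 + t * t))) with (t * t) in E
    by (field; nra).
  nra.
Qed.

Lemma pdist_on_circle (O : point) (r x y : R) : 0 < r -> x * x + y * y = 1 ->
  pdist (fst O + r * x, snd O + r * y) O = r.
Proof.
  intros Hr Hxy. unfold pdist; cbn [fst snd].
  replace ((fst O + r * x - fst O) ^ 2 + (snd O + r * y - snd O) ^ 2) with (r * r)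
    by (rewrite <- (Rmult_1_r (r * r)), <- Hxy; ring).
  apply sqrt_square; lra.
Qed.

Lemma pdist_even_pow (P Q : point) (m : nat) :
  pdist P Q ^ (2 * m) = ((fst P - fst Q) ^ 2 + (snd P - snd Q) ^ 2) ^ m.
Proof.
  unfold pdist. rewrite pow_mult, pow2_sqrt; [reflexivity|].
  apply Rplus_le_le_0_compat; apply pow2_ge_0.
Qed.

Lemma polar_form (x y : R) : ~ (x = 0 /\ y = 0) ->
  exists rho theta, 0 < rho /\ x = rho * cos theta /\ y = rho * sin theta.
Proof.
  intro Hxy.
  set (rho := sqrt (x * x + y * y)).
  assert (Hpos : 0 < x * x + y * y).
  { destruct (Req_dec x 0) as [Hx|Hx]; [assert (y <> 0) by tauto|]; nra. }
  assert (Hrho : 0 < rho) by (apply sqrt_lt_R0; exact Hpos).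
  assert (Hrho2 : rho * rho = x * x + y * y) by (apply sqrt_sqrt; lra).
  set (c := x / rho).
  assert (Hx : x = rho * c) by (unfold c; field; lra).
  assert (Hc : -1 <= c <= 1).
  { assert (c * c <= 1) by (apply (Rmult_le_reg_l (rho * rho)); nra). nra. }
  assert (Hs : sqrt (1 - c²) = Rabs (y / rho)).
  { rewrite <- sqrt_Rsqr_abs. f_equal. unfold c, Rsqr.
    replace (1 - x / rho * (x / rho)) with ((rho * rho - x * x) / (rho * rho)) by (field; lra).
    replace (y / rho * (y / rho)) with (y * y / (rho * rho)) by (field; lra).
    f_equal. lra. }
  exists rho.
  destruct (Rle_dec 0 y) as [Hy|Hy].
  - exists (acos c). rewrite cos_acos, sin_acos, Hs, Rabs_right by
      (auto; apply Rle_ge, Rle_mult_inv_pos; lra).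
    split; [lra | split; [lra | field; lra]].
  - exists (- acos c). rewrite cos_neg, sin_neg, cos_acos, sin_acos, Hs, Rabs_left by
      (auto; apply Rdiv_neg_pos; lra).
    split; [lra | split; [lra | field; lra]].
Qed.

Definition vertex_angle (n k : nat) : R := 2 * PI * INR k / INR n.

Lemma vertex_angle_full_turn (n k : nat) : (0 < n)%nat ->
  cos (INR n * vertex_angle n k) = 1 /\ sin (INR n * vertex_angle n k) = 0.
Proof.
  intro Hn. assert (0 < INR n) by (apply lt_0_INR; exact Hn).
  replace (INR n * vertex_angle n k) with (0 + 2 * INR k * PI)
    by (unfold vertex_angle; field; lra).
  rewrite cos_period, sin_period, cos_0, sin_0. split; reflexivity.
Qed.

Lemma vertex_angles_distinct (n k l : nat) : (k < n)%nat -> (l < n)%nat ->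
  cos (vertex_angle n k) = cos (vertex_angle n l) ->
  sin (vertex_angle n k) = sin (vertex_angle n l) -> k = l.
Proof.
  intros Hk Hl Hc Hs.
  set (d := vertex_angle n k - vertex_angle n l).
  assert (Hcd : cos d = 1).
  { unfold d, Rminus. rewrite cos_plus, cos_neg, sin_neg, Hc, Hs.
    pose proof (sin2_cos2 (vertex_angle n l)) as E. unfold Rsqr in E. lra. }
  assert (Hsd : sin d = 0).
  { unfold d, Rminus. rewrite sin_plus, cos_neg, sin_neg, Hc, Hs. ring. }
  destruct (sin_eq_0_0 d Hsd) as [z Hz].
  apply lt_INR in Hk, Hl.
  pose proof (pos_INR k). pose proof (pos_INR l). pose proof PI_RGT_0.
  assert (Hd : IZR z * INR n = 2 * (INR k - INR l)).
  { apply (Rmult_eq_reg_r PI); [|lra].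
    replace (IZR z * INR n * PI) with (IZR z * PI * INR n) by ring.
    rewrite <- Hz. unfold d, vertex_angle; field; lra. }
  assert (Hz1 : (IZR z < 2)%R) by nra.
  assert (Hz2 : (-2 < IZR z)%R) by nra.
  apply lt_IZR in Hz1. apply lt_IZR in Hz2.
  assert (Hz3 : z = (-1)%Z \/ z = 0%Z \/ z = 1%Z) by lia.
  destruct Hz3 as [E|[E|E]]; subst z.
  - replace d with (- PI) in Hcd by (rewrite Hz; simpl; ring).
    rewrite cos_neg, cos_PI in Hcd. lra.
  - apply INR_eq. simpl in Hd. lra.
  - replace d with PI in Hcd by (rewrite Hz; simpl; ring). rewrite cos_PI in Hcd. lra.
Qed.

Module PolygonAlgebra.
Import all_boot all_algebra ring Rstruct complex.
Import GRing.Theory Num.Theory.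
Local Open Scope ring_scope.
Local Set Implicit Arguments.
Local Unset Strict Implicit.

Lemma poly_eq0_of_roots (F : idomainType) (p : {poly F}) (n : nat) (a : nat -> F) :
  (forall i j, (i < n)%N -> (j < n)%N -> a i = a j -> i = j) ->
  (forall i, (i < n)%N -> p.[a i] = 0) -> (size p <= n)%N -> p = 0.
Proof.
move=> a_inj pa sp; apply: (@roots_geq_poly_eq0 _ p (mkseq a n)).
- apply/allP => _ /seq.mapP [i iin ->].
  by move: iin; rewrite mem_iota => /andP [_ ilt]; rewrite /root pa.
- rewrite map_inj_in_uniq ?iota_uniq // => i j.
  by rewrite !mem_iota => /andP [_ ilt] /andP [_ jlt]; apply: a_inj.
- by rewrite size_mkseq.
Qed.

Lemma poly_eq0_of_inj_roots (F : idomainType) (p : {poly F}) (f : nat -> F) :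
  injective f -> (forall k, p.[f k] = 0) -> p = 0.
Proof. by move=> f_inj pf; apply: (@poly_eq0_of_roots _ _ (size p) f) => // i j _ _ /f_inj. Qed.

Lemma coef_XsubC_exp (F : comNzRingType) (c : F) m j : (j <= m)%N ->
  (('X - c%:P) ^+ m)`_j = (- c) ^+ (m - j) *+ 'C(m, j).
Proof.
move=> jm; rewrite addrC exprDn coef_sum (bigD1 (Ordinal (jm : j < m.+1)%N)) //=.
rewrite big1 ?addr0 => [|i /eqP ne];
  rewrite coefMn -polyCN -polyC_exp coefCM coefXn ?eqxx ?mulr1 //.
by case: eqP => [e|]; [case: ne; apply: val_inj | rewrite mulr0 mul0rn].
Qed.

Section PowerSumsToNthPowers.
Variables (F : numDomainType) (n : nat) (a : nat -> F).
Hypothesis n_gt0 : (0 < n)%N.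
Hypothesis a_inj : forall i j, (i < n)%N -> (j < n)%N -> a i = a j -> i = j.
Hypothesis power_sums0 : forall k, (0 < k < n)%N -> \sum_(i < n) a i ^+ k = 0.

Lemma sum_horner_small (f : {poly F}) : (size f <= n)%N ->
  \sum_(i < n) f.[a i] = f.[0] *+ n.
Proof.
move=> sf; under eq_bigr => i _ do rewrite (horner_coef_wide _ sf).
rewrite exchange_big horner_coef0 /=.
case: n n_gt0 power_sums0 => // n' _ ps; rewrite big_ord_recl /= [X in _ + X]big1 ?addr0.
  rewrite -mulr_sumr; under eq_bigr => i _ do rewrite expr0.
  by rewrite sumr_const card_ord mulr_natr.
by move=> k _; rewrite -mulr_sumr ps ?mulr0 // /bump /= add1n ltnS ltn_ord.
Qed.

Definition annihilator : {poly F} := \prod_(i < n) ('X - (a i)%:P).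
Definition cofactor (j : 'I_n) : {poly F} := \prod_(i < n | i != j) ('X - (a i)%:P).

Lemma annihilator_split (j : 'I_n) : annihilator = ('X - (a j)%:P) * cofactor j.
Proof. by rewrite /annihilator (bigD1 j). Qed.

Lemma annihilator_monic : annihilator \is monic.
Proof. exact: monic_prod_XsubC. Qed.

Lemma size_annihilator : size annihilator = n.+1.
Proof.
rewrite /annihilator -(big_mkord xpredT (fun i => 'X - (a i)%:P)) size_prod_XsubC.
by rewrite /index_iota subn0 size_iota.
Qed.

Lemma annihilator_root (j : nat) : (j < n)%N -> annihilator.[a j] = 0.
Proof.
by move=> jn; rewrite (annihilator_split (Ordinal jn)) hornerM hornerXsubC subrr mul0r.
Qed.

Lemma size_cofactor j : (size (cofactor j) <= n)%N.
Proof.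
have := size_annihilator; rewrite (annihilator_split j) mulrC size_Mmonic ?monicXsubC //.
  by rewrite size_XsubC addn2 => -[->].
by rewrite monic_neq0 ?monic_prod_XsubC.
Qed.

(* The Lagrange-type cofactor takes at a j the value n times its value at 0,
   because all other a i are roots of it and the power sums p_1, ..., p_(n-1) vanish. *)
Lemma cofactor_at_root (j : 'I_n) : (cofactor j).[a j] = (cofactor j).[0] *+ n.
Proof.
rewrite -sum_horner_small ?size_cofactor // (bigD1 j) //= big1 ?addr0 // => i ij.
rewrite /cofactor horner_prod; apply/eqP/prodf_eq0.
by exists i => //; rewrite hornerXsubC subrr.
Qed.

(* The polynomial X Q' - n (Q - Q(0)) has degree < n (its X^n terms cancel) and vanishes
   at every a j, hence is zero: the coefficients of X, ..., X^(n-1) in Q vanish. *)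
Definition euler_defect : {poly F} :=
  annihilator^`() * 'X - (annihilator - (annihilator.[0])%:P) *+ n.

Lemma euler_defect_root (j : nat) : (j < n)%N -> euler_defect.[a j] = 0.
Proof.
move=> jn; set J := Ordinal jn.
have Q0 : annihilator.[0] = - a j * (cofactor J).[0].
  by rewrite (annihilator_split J) hornerM hornerXsubC sub0r.
have dQ : annihilator^`().[a j] = (cofactor J).[a j].
  rewrite (annihilator_split J) derivM derivXsubC mul1r hornerD hornerM.
  by rewrite hornerXsubC subrr mul0r addr0.
rewrite /euler_defect hornerD hornerN hornerMn hornerMX hornerD hornerN hornerC.
by rewrite annihilator_root // dQ cofactor_at_root Q0 sub0r; ring.
Qed.

Lemma size_euler_defect : (size euler_defect <= n)%N.
Proof.
apply/leq_sizeP => k kn; have k0 : k != 0%N by rewrite -lt0n (leq_trans n_gt0).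
rewrite coefB coefMX (negbTE k0) coef_deriv coefMn coefB coefC (negbTE k0) subr0.
rewrite prednK ?lt0n //; case: (ltngtP k n) kn => // [nk|<-] _; last by rewrite subrr.
by rewrite nth_default ?mul0rn ?subrr // size_annihilator.
Qed.

Lemma annihilator_coef_mid k : (0 < k < n)%N -> annihilator`_k = 0.
Proof.
case/andP => k0 kn.
have := congr1 (fun p : {poly F} => p`_k)
  (poly_eq0_of_roots a_inj euler_defect_root size_euler_defect).
rewrite coefB coefMX eqn0Ngt k0 /= coef_deriv coefMn coefB coefC eqn0Ngt k0 subr0 prednK //.
rewrite coef0 -mulr_natr -[_ *+ n]mulr_natr -mulrBr => /eqP.
by rewrite mulf_eq0 subr_eq0 eqr_nat (ltn_eqF kn) orbF => /eqP.
Qed.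

(* Hence Q = X^n + Q(0), so every a j is an n-th root of - Q(0). *)
Lemma nth_power_eq (j : nat) : (j < n)%N -> a j ^+ n = - annihilator.[0].
Proof.
move=> jn; apply/eqP; rewrite -addr_eq0 horner_coef0.
have := annihilator_root jn; rewrite (horner_coef_wide _ (eq_leq size_annihilator)).
rewrite big_ord_recr /= (bigD1 (Ordinal n_gt0)) //= big1 => [|i i0].
  have := monicP annihilator_monic; rewrite lead_coefE size_annihilator => ->.
  by rewrite expr0 mulr1 mul1r addr0 addrC => ->.
rewrite annihilator_coef_mid ?mul0r // ltn_ord andbT lt0n.
by apply: contra i0 => /eqP i0; apply/eqP/val_inj.
Qed.

Lemma nth_powers_equal (j : nat) : (j < n)%N -> a j ^+ n = a 0%N ^+ n.
Proof. by move=> jn; rewrite !nth_power_eq. Qed.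

(* For n >= 2 no a j is zero: otherwise a 0 = a 1 = 0. *)
Lemma nth_root_neq0 : (1 < n)%N -> a 0%N != 0.
Proof.
move=> n_gt1; apply/eqP => a00; have := nth_powers_equal n_gt1.
rewrite a00 expr0n (gtn_eqF n_gt0) => /eqP; rewrite expf_eq0 n_gt0 /= => /eqP a10.
by have := a_inj n_gt1 n_gt0 (etrans a10 (esym a00)).
Qed.

End PowerSumsToNthPowers.

(* Numbers a i whose moment of order m is constant on circles of infinitely many radii
   (rad k, sampled at infinitely many points u j of modulus one) have vanishing power sums
   p_1, ..., p_m.  For the geometric application b i is the conjugate of a i and v j the
   conjugate of u j; only the algebraic relations below are needed. *)
Section CircleMomentsToPowerSums.
Variables (C : numFieldType) (n m : nat) (a b : nat -> C) (u v rad : nat -> C).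
Hypothesis u_inj : injective u.
Hypothesis uv1 : forall j, u j * v j = 1.
Hypothesis rad2 : forall k, rad k ^+ 2 = k.+1%:R.

Definition moment (s t : C) : C := \sum_(i < n) ((s - a i) * (t - b i)) ^+ m.

Hypothesis moment_const : forall k, exists K, forall j, moment (rad k * u j) (rad k * v j) = K.

Lemma rad_neq0 k : rad k != 0.
Proof.
by apply/eqP => r0; have := rad2 k; rewrite r0 expr0n /= => /eqP; rewrite eq_sym pnatr_eq0.
Qed.

Lemma natS_inj : injective (fun k : nat => k.+1%:R : C).
Proof. by move=> x y /eqP; rewrite eqr_nat eqSS => /eqP. Qed.

Definition moment_poly (r K : C) : {poly C} :=
  \sum_(i < n) ((r *: 'X - (a i)%:P) ^+ m * (r%:P - b i *: 'X) ^+ m) - K *: 'X^m.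

Lemma moment_poly_eval r K x y : x * y = 1 ->
  (moment_poly r K).[x] = x ^+ m * (moment (r * x) (r * y) - K).
Proof.
move=> xy; rewrite /moment_poly hornerD hornerN horner_sum hornerZ hornerXn /moment.
rewrite mulrBr mulr_sumr [K * _]mulrC; congr (_ - _); apply: eq_bigr => i _.
rewrite hornerM !horner_exp !(hornerD, hornerN, hornerZ, hornerX, hornerC).
have -> : r - b i * x = x * (r * y - b i) by rewrite mulrBr mulrCA xy mulr1 mulrC.
by rewrite !exprMn mulrCA.
Qed.

(* On the circle of radius rad k the moment is constant not only at the points u j but at
   every x <> 0, since moment_poly vanishes at all u j. *)
Lemma moment_const_everywhere k :
  exists K, forall x, x != 0 -> moment (rad k * x) (rad k * x^-1) = K.
Proof.
have [K HK] := moment_const k; exists K.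
have P0 : moment_poly (rad k) K = 0.
  apply: (poly_eq0_of_inj_roots u_inj) => j.
  by rewrite (moment_poly_eval _ _ (uv1 j)) HK subrr mulr0.
move=> x x0; have := moment_poly_eval (rad k) K (mulfV x0).
rewrite P0 horner0 => /esym/eqP.
by rewrite mulf_eq0 expf_eq0 (negbTE x0) andbF /= subr_eq0 => /eqP.
Qed.

Definition rescaled_poly (s : C) : {poly C} :=
  \sum_(i < n) ((s - a i) ^+ m) *: ('X - (s * b i)%:P) ^+ m
  - s ^+ m *: \sum_(i < n) ((1 - a i) ^+ m) *: ('X - (b i)%:P) ^+ m.

Lemma rescaled_poly_eval s w : s != 0 ->
  (rescaled_poly s).[w] = s ^+ m * (moment s (w / s) - moment 1 w).
Proof.
move=> s0; rewrite /rescaled_poly hornerD hornerN hornerZ !horner_sum /moment mulrBr.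
congr (_ - _); last first.
  by congr (_ * _); apply: eq_bigr => i _; rewrite hornerZ horner_exp hornerXsubC exprMn.
rewrite mulr_sumr; apply: eq_bigr => i _; rewrite hornerZ horner_exp hornerXsubC.
have -> : w - s * b i = s * (w / s - b i) by rewrite mulrBr mulrCA divff // mulr1.
by rewrite !exprMn mulrCA.
Qed.

(* With r = rad k, the points x = s / r and x = 1 / r give M(s, r^2 / s) = M(1, r^2), so
   rescaled_poly s vanishes at all w = k + 1; its coefficient of w^m shows that
   sum_i (s - a i)^m is homogeneous of degree m in s. *)
Lemma moment_homogeneous s : s != 0 ->
  \sum_(i < n) (s - a i) ^+ m = s ^+ m * \sum_(i < n) (1 - a i) ^+ m.
Proof.
move=> s0; have P0 : rescaled_poly s = 0.
  apply: (poly_eq0_of_inj_roots natS_inj) => k; set r := rad k.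
  have r0 : r != 0 by apply: rad_neq0.
  have [K HK] := moment_const_everywhere k.
  have := HK (s / r); have := HK r^-1.
  rewrite invr_eq0 r0 mulf_neq0 ?invr_eq0 // invrK divff // -expr2 rad2.
  rewrite mulrCA divff // mulr1 invf_div mulrA -expr2 rad2 => /(_ isT) h1 /(_ isT) h2.
  by rewrite rescaled_poly_eval // h2 h1 subrr mulr0.
have := congr1 (fun p : {poly C} => p`_m) P0.
rewrite /rescaled_poly coefB coefZ !coef_sum coef0.
under eq_bigr => i _ do rewrite coefZ coef_XsubC_exp // subnn expr0 binn mulr1n mulr1.
under [X in _ * X]eq_bigr => i _
  do rewrite coefZ coef_XsubC_exp // subnn expr0 binn mulr1n mulr1.
by move/eqP; rewrite subr_eq0 => /eqP.
Qed.

(* Hence sum_i (X - a i)^m = kappa X^m, whose lower coefficients are,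
   up to nonzero factors, the power sums p_1, ..., p_m of the a i. *)
Lemma power_sums_vanish k : (0 < k <= m)%N -> \sum_(i < n) a i ^+ k = 0.
Proof.
case/andP => k0 km; set kappa := \sum_(i < n) (1 - a i) ^+ m.
have P0 : \sum_(i < n) ('X - (a i)%:P) ^+ m - kappa *: 'X^m = 0.
  apply: (poly_eq0_of_inj_roots natS_inj) => j.
  rewrite hornerD hornerN hornerZ hornerXn horner_sum.
  under eq_bigr => i _ do rewrite horner_exp hornerXsubC.
  by rewrite moment_homogeneous ?pnatr_eq0 // mulrC subrr.
have := congr1 (fun p : {poly C} => p`_(m - k)) P0.
have mk : (m - k < m)%N by rewrite ltn_subrL k0 (leq_trans k0 km).
rewrite coefB coefZ coef_sum coefXn coef0 (ltn_eqF mk) mulr0 subr0.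
under eq_bigr => i _ do rewrite coef_XsubC_exp ?leq_subr // subKn // exprNn.
rewrite sumrMnl -mulr_sumr => /eqP; rewrite mulrn_eq0 mulf_eq0 signr_eq0 /=.
by rewrite eqn0Ngt bin_gt0 leq_subr /= => /eqP.
Qed.

End CircleMomentsToPowerSums.

Lemma nth_root_among (F : idomainType) (n : nat) (a : nat -> F) (c x : F) :
  (0 < n)%N -> (forall i j, (i < n)%N -> (j < n)%N -> a i = a j -> i = j) ->
  (forall j, (j < n)%N -> a j ^+ n = c) -> x ^+ n = c ->
  has (fun j => a j == x) (iota 0 n).
Proof.
move=> n0 a_inj ac xc; apply: contraT => x_new.
suff : 'X^n - c%:P = 0 :> {poly F}.
  by move/(congr1 (fun p : {poly F} => size p)); rewrite size_XnsubC // size_poly0.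
apply: (@poly_eq0_of_roots _ _ n.+1 (fun j => if j == n then x else a j)).
- move=> i j; rewrite !ltnS.
  case: eqP => [->|/eqP ni] in0; case: eqP => [->|/eqP nj] jn // e.
  + by case/hasP: x_new; exists j; rewrite ?mem_iota ?add0n ?ltn_neqAle ?nj // e.
  + by case/hasP: x_new; exists i; rewrite ?mem_iota ?add0n ?ltn_neqAle ?ni // e.
  + by apply: a_inj; rewrite // ltn_neqAle ?ni ?nj.
- move=> i; rewrite ltnS !hornerE; case: eqP => [_|/eqP ni] iN.
    by rewrite xc subrr.
  by rewrite ac ?subrr // ltn_neqAle ni.
- by rewrite size_XnsubC.
Qed.

Lemma matching_of_cover (T : eqType) (n : nat) (a w : nat -> T) :
  (forall i j, (i < n)%N -> (j < n)%N -> w i = w j -> i = j) ->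
  (forall k, (k < n)%N -> has (fun j => a j == w k) (iota 0 n)) ->
  exists sigma : nat -> nat,
    (forall k, (k < n)%N -> (sigma k < n)%N) /\
    (forall k l, (k < n)%N -> (l < n)%N -> sigma k = sigma l -> k = l) /\
    (forall k, (k < n)%N -> a (sigma k) = w k).
Proof.
move=> w_inj covered; pose sigma k := find (fun j => a j == w k) (iota 0 n).
have sigma_lt : forall k, (k < n)%N -> (sigma k < n)%N.
  by move=> k kn; rewrite /sigma -[X in (_ < X)%N](size_iota 0 n) -has_find covered.
have sigmaP : forall k, (k < n)%N -> a (sigma k) = w k.
  by move=> k kn; have := nth_find 0 (covered k kn); rewrite nth_iota ?sigma_lt // => /eqP.
exists sigma; split => //; split => // k l kn ln e.
by apply: w_inj => //; rewrite -(sigmaP k kn) -(sigmaP l ln) e.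
Qed.

Local Open Scope complex_scope.

Definition cexp (t : R) : R[i] := Complex (cos t) (sin t).

Lemma cexpD (s t : R) : cexp (Rplus s t) = cexp s * cexp t.
Proof. by rewrite /cexp cos_plus sin_plus; simpc; congr Complex; apply: Rplus_comm. Qed.

Lemma cexp_natmul (t : R) (k : nat) : cexp t ^+ k = cexp (Rmult (INR k) t).
Proof.
elim: k => [|k IH]; first by rewrite expr0 Rmult_0_l /cexp cos_0 sin_0.
by rewrite exprS IH -cexpD S_INR Rmult_plus_distr_r Rmult_1_l Rplus_comm.
Qed.

Lemma cexp_vertex_angle_exp (n k : nat) : (0 < n)%N -> cexp (vertex_angle n k) ^+ n = 1.
Proof.
move=> /ssrnat.ltP n0; have [c1 s1] := vertex_angle_full_turn n k n0.
by rewrite cexp_natmul /cexp c1 s1.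
Qed.

Lemma cexp_vertex_angle_inj (n k l : nat) : (k < n)%N -> (l < n)%N ->
  cexp (vertex_angle n k) = cexp (vertex_angle n l) -> k = l.
Proof.
by move=> /ssrnat.ltP kn /ssrnat.ltP ln [ec es]; apply: (vertex_angles_distinct n k l).
Qed.

Definition offset (P O : point) : R[i] := Complex (fst P - fst O) (snd P - snd O).

Lemma offset_inj (O P Q : point) : offset P O = offset Q O -> P = Q.
Proof. by case: P Q => [x y] [x' y'] [/subIr -> /subIr ->]. Qed.

Lemma offset_sqr_dist (P Q O : point) :
  (offset P O - offset Q O) * (offset P O - offset Q O)^* =
  ((fst P - fst Q) ^+ 2 + (snd P - snd Q) ^+ 2)%:C.
Proof. by rewrite /offset; simpc; congr Complex; ring. Qed.

Lemma offset_polar (P O : point) : offset P O != 0 ->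
  exists rho theta, Rlt 0 rho /\ offset P O = rho%:C * cexp theta.
Proof.
case: (offset P O) => x y nz; have [|rho [theta [rho0 [ex ey]]]] := polar_form x y.
  by case=> ex ey; move: nz; rewrite ex ey eqxx.
by exists rho, theta; split => //; rewrite ex ey /cexp; simpc.
Qed.

Lemma offset_ngon_vertex (n : nat) (O : point) (rho theta : R) (k : nat) :
  offset (ngon_vertex n O rho theta k) O = rho%:C * cexp theta * cexp (vertex_angle n k).
Proof.
rewrite -mulrA -cexpD /offset /ngon_vertex /cexp /vertex_angle /=; simpc.
by congr Complex; rewrite !RplusE RmultE; ring.
Qed.

Definition unit_pt (j : nat) : R[i] := Complex (circle_x (INR j)) (circle_y (INR j)).
Definition radius (k : nat) : R := sqrt (Rplus (INR k) 1).

Lemma radius_gt0 (k : nat) : Rlt 0 (radius k).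
Proof. exact: sqrt_lt_R0 (Rplus_le_lt_0_compat _ _ (pos_INR k) Rlt_0_1). Qed.

Lemma radius_sqr (k : nat) : (radius k)%:C ^+ 2 = k.+1%:R.
Proof.
rewrite -rmorphXn -(rmorph_nat (real_complex R)) expr2 -RmultE sqrt_sqrt.
  by rewrite INRE RplusE natr1.
exact: Rlt_le (Rplus_le_lt_0_compat _ _ (pos_INR k) Rlt_0_1).
Qed.

Lemma unit_pt_inj : injective unit_pt.
Proof. by move=> j l [/circle_x_inj e _]; apply: INR_eq; apply: e; apply: pos_INR. Qed.

Lemma unit_pt_conj (j : nat) : unit_pt j * (unit_pt j)^* = 1.
Proof.
have := circle_xy_norm (INR j); rewrite /unit_pt; simpc => norm1.
rewrite RplusE !RmultE R1E in norm1.
by rewrite norm1 [_ * circle_x _]mulrC addNr.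
Qed.

Lemma sumR_complex (n : nat) (f : nat -> R) : (sumR n f)%:C = \sum_(i < n) (f i)%:C.
Proof.
elim: n => [|n IH]; first by rewrite big_ord0.
by rewrite big_ord_recr -IH /= -rmorphD.
Qed.

Lemma complex_moments_const (n : nat) (A : nat -> point) (O : point) :
  constant_moments n A O -> forall k, exists K, forall j,
    moment n n.-1 (fun i => offset (A i) O) (fun i => (offset (A i) O)^*)
      ((radius k)%:C * unit_pt j) ((radius k)%:C * (unit_pt j)^*) = K.
Proof.
move=> Hconst k; have [c Hc] := Hconst _ (radius_gt0 k); exists c%:C => j.
set P := (fst O + radius k * circle_x (INR j), snd O + radius k * circle_y (INR j))%R.
have PO : (radius k)%:C * unit_pt j = offset P O.
  by rewrite /offset /P /=; simpc; congr Complex; ring.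
have PO' : (radius k)%:C * (unit_pt j)^* = (offset P O)^* by rewrite -PO /unit_pt; simpc.
rewrite -(Hc P (pdist_on_circle _ _ _ _ (radius_gt0 k) (circle_xy_norm _))) sumR_complex.
apply: eq_bigr => i _; rewrite PO PO' -!rmorphB.
rewrite offset_sqr_dist -rmorphXn; congr Complex.
have -> : ((2 * n)%coq_nat - 2)%coq_nat = (2 * n.-1)%coq_nat by lia.
by rewrite pdist_even_pow !RpowE RplusE !RminusE.
Qed.

Lemma offsets_distinct (n : nat) (A : nat -> point) (O : point) :
  distinct_points n A ->
  forall i j, (i < n)%N -> (j < n)%N -> offset (A i) O = offset (A j) O -> i = j.
Proof.
move=> Hdist i j /ssrnat.ltP iN /ssrnat.ltP jN /offset_inj e.
by case: (Nat.eq_dec i j) => // ne; case: (Hdist i j iN jN ne).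
Qed.

Lemma offsets_equal_nth_powers (n : nat) (A : nat -> point) (O : point) :
  (2 <= n)%coq_nat -> distinct_points n A -> constant_moments n A O ->
  offset (A 0%N) O != 0 /\
  forall j, (j < n)%N -> offset (A j) O ^+ n = offset (A 0%N) O ^+ n.
Proof.
move=> /ssrnat.leP n_gt1 Hdist Hconst; have n_gt0 := ltnW n_gt1.
have a_inj := offsets_distinct (O := O) Hdist.
have power_sums0 k : (0 < k < n)%N -> \sum_(i < n) offset (A i) O ^+ k = 0.
  case/andP => k0 kn.
  apply: (power_sums_vanish (rad := fun k => (radius k)%:C) unit_pt_inj unit_pt_conj
    radius_sqr (complex_moments_const Hconst)).
  by rewrite k0 -ltnS prednK.
split; first exact: (nth_root_neq0 n_gt0 a_inj power_sums0 n_gt1).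
exact: (nth_powers_equal n_gt0 a_inj power_sums0).
Qed.

(* Second half: with a0 = rho e^(i theta), the n distinct numbers a0 e^(2 i pi k / n) have the
   n-th power of a0, so they are a rearrangement of the offsets A i - O. *)
Lemma regular_ngon_of_equal_nth_powers (n : nat) (A : nat -> point) (O : point) :
  (2 <= n)%coq_nat -> distinct_points n A -> offset (A 0%N) O != 0 ->
  (forall j, (j < n)%N -> offset (A j) O ^+ n = offset (A 0%N) O ^+ n) ->
  is_regular_ngon_centred n A O.
Proof.
move=> /ssrnat.leP n_gt1 Hdist a0_neq0 a_pow; have n_gt0 := ltnW n_gt1.
set a0 := offset (A 0%N) O in a0_neq0 a_pow.
have [rho [theta [rho_gt0 a0E]]] := offset_polar a0_neq0.
pose w k := a0 * cexp (vertex_angle n k).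
have w_pow k : (k < n)%N -> w k ^+ n = a0 ^+ n.
  by move=> _; rewrite exprMn cexp_vertex_angle_exp // mulr1.
have w_inj k l : (k < n)%N -> (l < n)%N -> w k = w l -> k = l.
  by move=> kn ln /(mulfI a0_neq0); apply: cexp_vertex_angle_inj.
have [sigma [sigma_lt [sigma_inj sigmaE]]] := matching_of_cover w_inj
  (fun k kn => nth_root_among n_gt0 (offsets_distinct (O := O) Hdist) a_pow (w_pow k kn)).
exists rho, theta, sigma; split; first exact: rho_gt0.
split; first by move=> k /ssrnat.ltP kn; apply/ssrnat.ltP; apply: sigma_lt.
split; first by move=> k l /ssrnat.ltP kn /ssrnat.ltP ln; apply: sigma_inj.
move=> k /ssrnat.ltP kn; apply: (@offset_inj O).
by rewrite sigmaE // offset_ngon_vertex -a0E.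
Qed.

End PolygonAlgebra.

Theorem mainTheorem4 (n : nat) (A : nat -> point) (O : point) :
  (2 <= n)%nat ->
  (forall i j, (i < n)%nat -> (j < n)%nat -> i <> j -> A i <> A j) ->
  (forall r : R, 0 < r ->
     exists c : R, forall P : point, pdist P O = r ->
       sumR n (fun i => pdist P (A i) ^ (2 * n - 2)%nat) = c) ->
  is_regular_ngon_centred n A O.
Proof.
  intros Hn Hdistinct Hmoments.
  destruct (PolygonAlgebra.offsets_equal_nth_powers Hn Hdistinct Hmoments) as [Hnz Hpow].
  exact (PolygonAlgebra.regular_ngon_of_equal_nth_powers Hn Hdistinct Hnz Hpow).
Qed.
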